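(* For every $c_s>0$, there exists $\epsilon_0>0$ such that whenever $\epsilon\in(0,\epsilon_0]$, there is a constant $\delta>0$ (depending on $c_s$ and $\epsilon$) such that $$\inf_{K\in[c_s,c_s^{-1}]}|c'(K)|\geq\delta,$$ where $c$ is the function associated with the potential $\Phi(x)=\frac{x^2}{2}+\frac{\epsilon x^4}{2}$ as described in the context.
   Context: Let $\epsilon>0$, $\Phi(x)=\frac{x^2}{2}+\frac{\epsilon x^4}{2}$ and $H(x,v)=\frac{v^2}{2}+\Phi(x)$. For $(x,v)\neq(0,0)$ define the angle $\chi\in\mathbb{R}/2\pi\mathbb{Z}$ by $\chi=\arcsin\big(v/\sqrt{2H}\big)$ if $x>0$ and $\chi=\pi-\arcsin\big(v/\sqrt{2H}\big)$ if $x\leq 0$; then $(x,v)\mapsto(\chi,H)$ is a bijection onto $(\mathbb{R}/2\pi\mathbb{Z})\times(0,\infty)$, and we write $x=x(\chi,H)$. Set $a(\chi,H)=\sqrt{2}\,\frac{1+2\epsilon x^2}{\sqrt{1+\epsilon x^2}}$ with $x=x(\chi,H)$. Define $c(H)>0$ for $H>0$ by $c(H)\int_0^{2\pi}\frac{\mathrm{d}\chi}{a(\chi,H)}=2\pi$; we also write $c(K)$ with $K=H$. *)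

From Stdlib Require Import Reals ZArith ClassicalEpsilon.
From Coquelicot Require Import Coquelicot.
Open Scope R_scope.

Definition Phi (eps x : R) : R := x ^ 2 / 2 + eps * x ^ 4 / 2.
Definition Ham (eps x v : R) : R := v ^ 2 / 2 + Phi eps x.

(* The angle chi(x,v), as a real representative of its class in R/2piZ. *)
Definition chi_of (eps x v : R) : R :=
  if Rlt_dec 0 x then asin (v / sqrt (2 * Ham eps x v))
  else PI - asin (v / sqrt (2 * Ham eps x v)).

(* x(chi,H): the x-coordinate of the (unique, for H > 0) point (x,v) <> (0,0)
   with Ham(x,v) = H and chi(x,v) = chi mod 2pi.  Chosen by Hilbert epsilon. *)
Definition xcoord (eps chi H : R) : R :=
  epsilon (inhabits 0) (fun x => exists v : R, exists k : Z,
     (x, v) <> (0, 0) /\ Ham eps x v = H /\ chi_of eps x v = chi + 2 * IZR k * PI).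

Definition afun (eps chi H : R) : R :=
  let x := xcoord eps chi H in
  sqrt 2 * (1 + 2 * eps * x ^ 2) / sqrt (1 + eps * x ^ 2).

Definition cfun (eps H : R) : R :=
  2 * PI / RInt (fun chi => / afun eps chi H) 0 (2 * PI).

(* On the level set {Ham = H} the angle gives v = sqrt (2H) sin chi, hence
   Phi x = H cos^2 chi, and x^2 is the nonnegative root of eps u^2 + u = 2 H cos^2 chi.
   So 1/a(chi,H) = g (H cos^2 chi) with g s = sqrt (1 + W) / (2 W), W = sqrt (1 + 8 eps s),
   and c H = 2 pi / J H where J H = int_0^{2 pi} g (H cos^2 chi) dchi.  Differentiating
   under the integral, J' H = int cos^2 chi g' (H cos^2 chi) dchi.  On [0, 1/cs] we have
   g <= 1 and g' <= -m with m = eps / (W^3 (1 + W)) evaluated at s = 1/cs, hence for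
   H <= 1/cs, J H <= 2 pi and J' H <= - pi m, so |c'| = 2 pi |J'| / J^2 >= m / 2.
   No smallness of eps is needed. *)

From Stdlib Require Import Reals Lra Psatz ClassicalEpsilon.
From Coquelicot Require Import Coquelicot.
Open Scope R_scope.

Section DilatedIntegral.

Variables (g g' p : R -> R) (a b : R).
Hypothesis g_derive : forall s, 0 <= s -> is_derive g s (g' s).
Hypothesis g'_continuous : forall s, 0 <= s -> continuous g' s.
Hypothesis p_ge_0 : forall t, 0 <= p t.
Hypothesis p_continuous : forall t, continuous p t.

Lemma is_derive_dilate H t : 0 <= H ->
  is_derive (fun u => g (u * p t)) H (p t * g' (H * p t)).
Proof.
  intros HH.
  apply (is_derive_comp g (fun u => u * p t)).
  - apply g_derive, Rmult_le_pos; auto.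
  - auto_derive; [auto | ring].
Qed.

Lemma continuous_dilate_comp (f : R -> R) H t : 0 <= H ->
  (forall s, 0 <= s -> continuous f s) -> continuous (fun t => f (H * p t)) t.
Proof.
  intros HH Hf.
  apply (continuous_comp (fun t => H * p t) f).
  - apply (continuous_mult (fun _ => H)); [apply continuous_const | auto].
  - apply Hf, Rmult_le_pos; auto.
Qed.

Lemma g_continuous s : 0 <= s -> continuous g s.
Proof.
  intros; apply (ex_derive_continuous (K := R_AbsRing) (V := R_NormedModule)).
  eexists; now apply g_derive.
Qed.

Lemma ex_RInt_dilate H : 0 <= H -> ex_RInt (fun t => g (H * p t)) a b.
Proof.
  intros HH; apply (ex_RInt_continuous (V := R_CompleteNormedModule)); intros t _.
  now apply continuous_dilate_comp; [| apply g_continuous].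
Qed.

Lemma ex_RInt_dilate_derive H : 0 <= H -> ex_RInt (fun t => p t * g' (H * p t)) a b.
Proof.
  intros HH; apply (ex_RInt_continuous (V := R_CompleteNormedModule)); intros t _.
  apply (continuous_mult (K := R_AbsRing) p); [auto | now apply continuous_dilate_comp].
Qed.

Lemma continuity_2d_pt_dilate_derive H t : 0 < H ->
  continuity_2d_pt (fun u v => Derive (fun z => g (z * p v)) u) H t.
Proof.
  intros HH.
  assert (Hp : forall v, continuity_pt p v)
    by (intros; apply continuity_pt_filterlim, p_continuous).
  apply continuity_2d_pt_ext_loc with (f := fun u v => p v * g' (u * p v)).
  - exists (mkposreal H HH); intros u v Hu _; apply Rabs_lt_between' in Hu; simpl in Hu.
    symmetry; apply is_derive_unique, is_derive_dilate; lra.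
  - apply continuity_2d_pt_mult.
    + apply (continuity_1d_2d_pt_comp p (fun _ v => v)); [auto | apply continuity_2d_pt_id2].
    + apply (continuity_1d_2d_pt_comp g' (fun u v => u * p v)).
      * apply continuity_pt_filterlim, g'_continuous, Rmult_le_pos; [lra | auto].
      * apply continuity_2d_pt_mult; [apply continuity_2d_pt_id1 |].
        apply (continuity_1d_2d_pt_comp p (fun _ v => v)); [auto | apply continuity_2d_pt_id2].
Qed.

Lemma is_derive_RInt_dilate H : 0 < H ->
  is_derive (fun u => RInt (fun t => g (u * p t)) a b) H (RInt (fun t => p t * g' (H * p t)) a b).
Proof.
  intros HH.
  assert (Hpos : locally H (fun u => 0 < u)) by now apply open_gt.
  rewrite (RInt_ext _ (fun t => Derive (fun u => g (u * p t)) H)).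
  2:{ intros t _; symmetry; apply is_derive_unique, is_derive_dilate; lra. }
  apply is_derive_RInt_param.
  - apply (filter_imp (fun u => 0 < u)); [| exact Hpos].
    intros u Hu t _; eexists; apply is_derive_dilate; lra.
  - intros t _; now apply continuity_2d_pt_dilate_derive.
  - apply (filter_imp (fun u => 0 < u)); [| exact Hpos].
    intros u Hu; apply ex_RInt_dilate; lra.
Qed.

End DilatedIntegral.

Lemma sin_plus_2kPI x k : sin (x + 2 * IZR k * PI) = sin x.
Proof.
  assert (Hs : sin (IZR k * PI) = 0) by (apply sin_eq_0_1; now exists k).
  replace (2 * IZR k * PI) with (2 * (IZR k * PI)) by ring.
  rewrite sin_plus, sin_2a, cos_2a_sin, Hs; ring.
Qed.

Lemma asin_sin_cos_pos chi : 0 <= chi <= 2 * PI -> 0 < cos chi ->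
  exists k : Z, asin (sin chi) = chi + 2 * IZR k * PI.
Proof.
  intros Hchi Hcos.
  destruct (Rle_dec chi (PI / 2)).
  - exists 0%Z; rewrite asin_sin by lra; ring.
  - assert (Hchi' : 3 * (PI / 2) < chi).
    { apply Rnot_le_lt; intro; pose proof (cos_le_0 chi); lra. }
    exists (-1)%Z; rewrite <- (sin_plus_2kPI chi (-1)), asin_sin; [ring |].
    simpl IZR; lra.
Qed.

Lemma asin_sin_cos_nonpos chi : 0 <= chi <= 2 * PI -> cos chi <= 0 ->
  PI - asin (sin chi) = chi.
Proof.
  intros Hchi Hcos.
  assert (Hlo : PI / 2 <= chi).
  { apply Rnot_lt_le; intro; pose proof (cos_gt_0 chi); lra. }
  assert (Hhi : chi <= 3 * (PI / 2)).
  { apply Rnot_lt_le; intro; pose proof (cos_gt_0 (chi - 2 * PI)).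
    rewrite cos_minus, cos_2PI, sin_2PI in *; lra. }
  rewrite <- sin_PI_x, asin_sin by lra; ring.
Qed.

Definition disc_sqrt (eps s : R) : R := sqrt (1 + 8 * eps * s).

Lemma disc_sqrt_ge_1 eps s : 0 <= eps -> 0 <= s -> 1 <= disc_sqrt eps s.
Proof. intros; rewrite <- sqrt_1 at 1; apply sqrt_le_1_alt; nra. Qed.

Lemma disc_sqrt_le eps s S : 0 <= eps -> s <= S -> disc_sqrt eps s <= disc_sqrt eps S.
Proof. intros; apply sqrt_le_1_alt; nra. Qed.

Lemma Phi_ge_0 eps x : 0 <= eps -> 0 <= Phi eps x.
Proof.
  intros; unfold Phi; replace (x ^ 4) with ((x ^ 2) ^ 2) by ring.
  pose proof (pow2_ge_0 x); pose proof (pow2_ge_0 (x ^ 2)); nra.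
Qed.

Lemma Phi_eq_iff eps x s : 0 < eps -> 0 <= s ->
  Phi eps x = s <-> x ^ 2 = (disc_sqrt eps s - 1) / (2 * eps).
Proof.
  intros He Hs.
  assert (HW2 : disc_sqrt eps s ^ 2 = 1 + 8 * eps * s) by (apply pow2_sqrt; nra).
  assert (HW1 := disc_sqrt_ge_1 eps s ltac:(lra) Hs).
  unfold Phi; replace (x ^ 4) with ((x ^ 2) ^ 2) by ring.
  assert (Hu := pow2_ge_0 x).
  set (u := x ^ 2) in *; set (W := disc_sqrt eps s) in *.
  split; intros E.
  - assert (Hsq : W ^ 2 = (2 * eps * u + 1) ^ 2) by (rewrite HW2, <- E; field).
    assert (HW : W = 2 * eps * u + 1).
    { assert (Heu : 0 <= eps * u) by (apply Rmult_le_pos; lra).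
      assert (Hf : (W - (2 * eps * u + 1)) * (W + (2 * eps * u + 1)) = 0).
      { replace 0 with (W ^ 2 - (2 * eps * u + 1) ^ 2) by lra; ring. }
      destruct (Rmult_integral _ _ Hf); lra. }
    rewrite HW; field; lra.
  - assert (Hs' : s = (W ^ 2 - 1) / (8 * eps)) by (rewrite HW2; field; lra).
    rewrite E, Hs'; field; lra.
Qed.

Lemma sin_chi_of eps x v : 0 <= eps -> 0 < Ham eps x v ->
  sin (chi_of eps x v) = v / sqrt (2 * Ham eps x v).
Proof.
  intros He HH.
  assert (Hq : sqrt (2 * Ham eps x v) ^ 2 = 2 * Ham eps x v) by (apply pow2_sqrt; lra).
  assert (Hq0 : 0 < sqrt (2 * Ham eps x v)) by (apply sqrt_lt_R0; lra).
  assert (Hv : v ^ 2 <= 2 * Ham eps x v) by (unfold Ham; pose proof (Phi_ge_0 eps x He); lra).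
  assert (Hy : -1 <= v / sqrt (2 * Ham eps x v) <= 1).
  { set (q := sqrt (2 * Ham eps x v)) in *.
    split; [apply Rmult_le_reg_r with q | apply Rmult_le_reg_r with q]; try lra;
      unfold Rdiv; rewrite Rmult_assoc, Rinv_l by lra; nra. }
  unfold chi_of; destruct (Rlt_dec 0 x).
  - now apply sin_asin.
  - rewrite sin_PI_x; now apply sin_asin.
Qed.

Lemma Phi_on_level eps x v chi k : 0 <= eps -> 0 < Ham eps x v ->
  chi_of eps x v = chi + 2 * IZR k * PI -> Phi eps x = Ham eps x v * cos chi ^ 2.
Proof.
  intros He HH Hc.
  assert (Hs : sin chi = v / sqrt (2 * Ham eps x v)).
  { rewrite <- (sin_plus_2kPI chi k), <- Hc; now apply sin_chi_of. }
  assert (Hq : sqrt (2 * Ham eps x v) ^ 2 = 2 * Ham eps x v) by (apply pow2_sqrt; lra).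
  assert (Hq0 : 0 < sqrt (2 * Ham eps x v)) by (apply sqrt_lt_R0; lra).
  assert (Hv : v ^ 2 = 2 * Ham eps x v * sin chi ^ 2).
  { rewrite Hs; set (q := sqrt (2 * Ham eps x v)) in *; rewrite <- Hq; field; lra. }
  assert (Hsc := sin2_cos2 chi); unfold Rsqr in Hsc.
  assert (HHam : Ham eps x v = v ^ 2 / 2 + Phi eps x) by reflexivity.
  set (H := Ham eps x v) in *.
  nra.
Qed.

Lemma level_point_exists eps chi H : 0 < eps -> 0 < H -> 0 <= chi <= 2 * PI ->
  exists x v : R, exists k : Z,
    (x, v) <> (0, 0) /\ Ham eps x v = H /\ chi_of eps x v = chi + 2 * IZR k * PI.
Proof.
  intros He HH Hchi.
  set (s := H * cos chi ^ 2).
  assert (Hs : 0 <= s) by (unfold s; nra).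
  set (U := (disc_sqrt eps s - 1) / (2 * eps)).
  assert (HU : 0 <= U).
  { pose proof (disc_sqrt_ge_1 eps s ltac:(lra) Hs).
    unfold U; apply Rmult_le_pos; [lra | apply Rlt_le, Rinv_0_lt_compat; lra]. }
  set (x := if Rlt_dec 0 (cos chi) then sqrt U else - sqrt U).
  set (v := sqrt (2 * H) * sin chi).
  assert (Hx2 : x ^ 2 = U).
  { unfold x; destruct (Rlt_dec 0 (cos chi));
      [| replace ((- sqrt U) ^ 2) with (sqrt U ^ 2) by ring]; now apply pow2_sqrt. }
  assert (HPhi : Phi eps x = s) by (apply Phi_eq_iff; auto).
  assert (Hham : Ham eps x v = H).
  { assert (Hsc := sin2_cos2 chi); unfold Rsqr in Hsc.
    assert (Hq : sqrt (2 * H) ^ 2 = 2 * H) by (apply pow2_sqrt; lra).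
    unfold Ham; rewrite HPhi; unfold v, s; rewrite Rpow_mult_distr, Hq; nra. }
  assert (Hsin : v / sqrt (2 * Ham eps x v) = sin chi).
  { rewrite Hham; unfold v; field; apply Rgt_not_eq, sqrt_lt_R0; lra. }
  exists x, v.
  assert (Hne : (x, v) <> (0, 0)).
  { intros E; injection E as -> ->; unfold Ham, Phi in Hham; lra. }
  unfold chi_of; rewrite Hsin.
  destruct (Rlt_dec 0 (cos chi)) as [Hcos | Hcos].
  - assert (Hx : 0 < x).
    { assert (x <> 0).
      { intros E; rewrite E in HPhi; unfold Phi, s in HPhi; ring_simplify in HPhi.
        assert (0 < H * cos chi ^ 2) by (apply Rmult_lt_0_compat; [lra | apply pow_lt; lra]).
        lra. }
      assert (0 <= x) by (unfold x; destruct (Rlt_dec 0 (cos chi)); [apply sqrt_pos | lra]).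
      lra. }
    destruct (asin_sin_cos_pos chi Hchi Hcos) as [k Hk].
    exists k; destruct (Rlt_dec 0 x); [auto | lra].
  - assert (Hx : x <= 0).
    { unfold x; destruct (Rlt_dec 0 (cos chi)); [lra |].
      pose proof (sqrt_pos U); lra. }
    exists 0%Z; destruct (Rlt_dec 0 x); [lra |].
    rewrite asin_sin_cos_nonpos by lra; repeat split; auto; ring.
Qed.

Lemma xcoord_sq eps chi H : 0 < eps -> 0 < H -> 0 <= chi <= 2 * PI ->
  xcoord eps chi H ^ 2 = (disc_sqrt eps (H * cos chi ^ 2) - 1) / (2 * eps).
Proof.
  intros He HH Hchi; unfold xcoord.
  destruct (epsilon_spec (inhabits 0) _ (level_point_exists eps chi H He HH Hchi))
    as [v [k [_ [Hh Hc]]]].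
  set (x := epsilon _ _) in *.
  assert (HPhi := Phi_on_level eps x v chi k ltac:(lra) ltac:(lra) Hc).
  rewrite Hh in HPhi.
  apply Phi_eq_iff; [auto | nra | auto].
Qed.

Definition ainv (eps s : R) : R := sqrt (1 + disc_sqrt eps s) / (2 * disc_sqrt eps s).

Definition ainv' (eps s : R) : R :=
  - eps * (disc_sqrt eps s + 2) / (disc_sqrt eps s ^ 3 * sqrt (1 + disc_sqrt eps s)).

Lemma inv_afun eps chi H : 0 < eps -> 0 < H -> 0 <= chi <= 2 * PI ->
  / afun eps chi H = ainv eps (H * cos chi ^ 2).
Proof.
  intros He HH Hchi; unfold afun; rewrite (xcoord_sq eps chi H He HH Hchi).
  assert (Hs : 0 <= H * cos chi ^ 2) by (apply Rmult_le_pos; [lra | apply pow2_ge_0]).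
  assert (HW := disc_sqrt_ge_1 eps _ ltac:(lra) Hs).
  unfold ainv; set (W := disc_sqrt eps _) in *.
  replace (1 + 2 * eps * ((W - 1) / (2 * eps))) with W by (field; lra).
  replace (1 + eps * ((W - 1) / (2 * eps))) with ((1 + W) / 2) by (field; lra).
  rewrite sqrt_div by lra.
  assert (H2 : sqrt 2 * sqrt 2 = 2) by (apply sqrt_sqrt; lra).
  assert (0 < sqrt 2) by (apply sqrt_lt_R0; lra).
  assert (0 < sqrt (1 + W)) by (apply sqrt_lt_R0; lra).
  replace (2 * W) with (sqrt 2 * sqrt 2 * W) by (rewrite H2; ring).
  field; lra.
Qed.

Lemma is_derive_ainv eps s : 0 < eps -> 0 <= s -> is_derive (ainv eps) s (ainv' eps s).
Proof.
  intros He Hs.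
  assert (HW := disc_sqrt_ge_1 eps s ltac:(lra) Hs).
  unfold ainv, ainv', disc_sqrt in *.
  auto_derive; [repeat split; nra |].
  set (w := sqrt (1 + 8 * eps * s)) in *.
  assert (Hq : 0 < sqrt (1 + w)) by (apply sqrt_lt_R0; lra).
  assert (Hq2 : sqrt (1 + w) * sqrt (1 + w) = 1 + w) by (apply sqrt_sqrt; lra).
  set (q := sqrt (1 + w)) in *.
  (* [ainv'] has [q] in the denominator where [auto_derive] left it in the numerator. *)
  replace (q * (- (2 * (8 * eps * 1 * / (2 * w))) * / (2 * w * (2 * w))))
    with ((q * q) * (- (2 * (8 * eps * 1 * / (2 * w))) * / (2 * w * (2 * w))) / q)
    by (field; lra).
  rewrite Hq2; field; lra.
Qed.

Lemma continuous_ainv' eps s : 0 < eps -> 0 <= s -> continuous (ainv' eps) s.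
Proof.
  intros He Hs.
  assert (HW := disc_sqrt_ge_1 eps s ltac:(lra) Hs).
  apply (ex_derive_continuous (K := R_AbsRing) (V := R_NormedModule)).
  unfold ainv', disc_sqrt in *.
  auto_derive; repeat split; try nra.
  assert (0 < sqrt (1 + sqrt (1 + 8 * eps * s))) by (apply sqrt_lt_R0; lra).
  assert (0 < sqrt (1 + 8 * eps * s) ^ 3) by (apply pow_lt; lra).
  apply Rgt_not_eq, Rmult_lt_0_compat; lra.
Qed.

Lemma ainv_le_1 eps s : 0 < eps -> 0 <= s -> ainv eps s <= 1.
Proof.
  intros He Hs.
  assert (Hw := disc_sqrt_ge_1 eps s ltac:(lra) Hs).
  unfold ainv; set (w := disc_sqrt eps s) in *.
  assert (Hq2 : sqrt (1 + w) * sqrt (1 + w) = 1 + w) by (apply sqrt_sqrt; lra).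
  assert (Hq : sqrt (1 + w) <= 2 * w) by (pose proof (sqrt_pos (1 + w)); nra).
  apply Rmult_le_reg_r with (2 * w); [lra |].
  unfold Rdiv; rewrite Rmult_assoc, Rinv_l by lra; lra.
Qed.

Lemma ainv_ge eps s S : 0 < eps -> 0 <= s <= S -> / (2 * disc_sqrt eps S) <= ainv eps s.
Proof.
  intros He Hs.
  assert (Hw := disc_sqrt_ge_1 eps s ltac:(lra) ltac:(lra)).
  assert (HwS := disc_sqrt_le eps s S ltac:(lra) ltac:(lra)).
  unfold ainv; set (w := disc_sqrt eps s) in *; set (W := disc_sqrt eps S) in *.
  assert (Hq : 1 <= sqrt (1 + w)) by (rewrite <- sqrt_1 at 1; apply sqrt_le_1_alt; lra).
  apply Rle_trans with (/ (2 * w)); [apply Rinv_le_contravar; lra |].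
  rewrite <- (Rmult_1_l (/ (2 * w))) at 1.
  apply Rmult_le_compat_r; [apply Rlt_le, Rinv_0_lt_compat |]; lra.
Qed.

Lemma ainv'_le eps s S : 0 < eps -> 0 <= s <= S ->
  ainv' eps s <= - (eps / (disc_sqrt eps S ^ 3 * (1 + disc_sqrt eps S))).
Proof.
  intros He Hs.
  assert (Hw := disc_sqrt_ge_1 eps s ltac:(lra) ltac:(lra)).
  assert (HwS := disc_sqrt_le eps s S ltac:(lra) ltac:(lra)).
  unfold ainv'; set (w := disc_sqrt eps s) in *; set (W := disc_sqrt eps S) in *.
  assert (Hq : 0 < sqrt (1 + w)) by (apply sqrt_lt_R0; lra).
  assert (Hq2 : sqrt (1 + w) * sqrt (1 + w) = 1 + w) by (apply sqrt_sqrt; lra).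
  set (q := sqrt (1 + w)) in *.
  assert (Hqle : q <= 1 + W) by nra.
  assert (Hw3 : w ^ 3 <= W ^ 3) by (apply pow_incr; lra).
  assert (Hw3p : 1 <= w ^ 3) by (rewrite <- (pow1 3); apply pow_incr; lra).
  assert (HD : w ^ 3 * q <= W ^ 3 * (1 + W)) by (apply Rmult_le_compat; lra).
  unfold Rdiv; rewrite <- Ropp_mult_distr_l, Ropp_mult_distr_l_reverse.
  apply Ropp_le_contravar; rewrite Rmult_assoc; apply Rmult_le_compat_l; [lra |].
  apply Rle_trans with (/ (w ^ 3 * q)); [apply Rinv_le_contravar; nra |].
  rewrite <- (Rmult_1_l (/ (w ^ 3 * q))) at 1.
  apply Rmult_le_compat_r; [apply Rlt_le, Rinv_0_lt_compat; nra | lra].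
Qed.

Definition int_inv_a (eps H : R) : R := RInt (fun t => ainv eps (H * cos t ^ 2)) 0 (2 * PI).

Definition int_inv_a' (eps H : R) : R :=
  RInt (fun t => cos t ^ 2 * ainv' eps (H * cos t ^ 2)) 0 (2 * PI).

Lemma continuous_cos_sq t : continuous (fun t => cos t ^ 2) t.
Proof.
  apply (ex_derive_continuous (K := R_AbsRing) (V := R_NormedModule)).
  auto_derive; auto.
Qed.

Lemma is_RInt_cos_sq : is_RInt (fun t => cos t ^ 2) 0 (2 * PI) PI.
Proof.
  set (F t := (t + sin t * cos t) / 2).
  assert (HF : minus (F (2 * PI)) (F 0) = PI).
  { unfold F, minus, plus, opp; simpl; rewrite sin_2PI, sin_0; field. }
  rewrite <- HF at 2.
  apply (is_RInt_derive (V := R_CompleteNormedModule) F); intros t _.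
  - unfold F; auto_derive; auto.
    assert (Hsc := sin2_cos2 t); unfold Rsqr in Hsc; nra.
  - apply continuous_cos_sq.
Qed.

Section Bounds.

Variables (eps H : R).
Hypothesis eps_gt_0 : 0 < eps.
Hypothesis H_ge_0 : 0 <= H.

Let dilate_ge_0 t : 0 <= H * cos t ^ 2.
Proof. apply Rmult_le_pos; [lra | apply pow2_ge_0]. Qed.

Let dilate_le t : H * cos t ^ 2 <= H.
Proof. pose proof (COS_bound t); assert (cos t ^ 2 <= 1) by nra; nra. Qed.

Let ex_RInt_inv_a : ex_RInt (fun t => ainv eps (H * cos t ^ 2)) 0 (2 * PI).
Proof.
  apply (ex_RInt_dilate (ainv eps) (ainv' eps)); auto using continuous_cos_sq, pow2_ge_0.
  intros; now apply is_derive_ainv.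
Qed.

Lemma int_inv_a_le : int_inv_a eps H <= 2 * PI.
Proof.
  pose proof PI_RGT_0.
  apply Rle_trans with (RInt (fun _ => 1) 0 (2 * PI)).
  - apply RInt_le; [lra | apply ex_RInt_inv_a | apply ex_RInt_const |].
    intros t _; now apply ainv_le_1.
  - rewrite RInt_const; unfold scal; simpl; unfold mult; simpl; lra.
Qed.

Lemma int_inv_a_gt_0 : 0 < int_inv_a eps H.
Proof.
  pose proof PI_RGT_0.
  pose proof (disc_sqrt_ge_1 eps H ltac:(lra) H_ge_0).
  apply Rlt_le_trans with (RInt (fun _ => / (2 * disc_sqrt eps H)) 0 (2 * PI)).
  - rewrite RInt_const; unfold scal; simpl; unfold mult; simpl.
    apply Rmult_lt_0_compat; [lra | apply Rinv_0_lt_compat; lra].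
  - apply RInt_le; [lra | apply ex_RInt_const | apply ex_RInt_inv_a |].
    intros t _; apply ainv_ge; auto.
Qed.

Lemma int_inv_a'_le S : H <= S ->
  int_inv_a' eps H <= - PI * (eps / (disc_sqrt eps S ^ 3 * (1 + disc_sqrt eps S))).
Proof.
  intros HS; pose proof PI_RGT_0.
  set (m := eps / (disc_sqrt eps S ^ 3 * (1 + disc_sqrt eps S))).
  replace (- PI * m) with (scal (- m) PI) by (unfold scal; simpl; unfold mult; simpl; ring).
  unfold int_inv_a'.
  apply (is_RInt_le (fun t => cos t ^ 2 * ainv' eps (H * cos t ^ 2))
    (fun t => scal (- m) (cos t ^ 2)) 0 (2 * PI)); [lra | | |].
  - apply (RInt_correct (V := R_CompleteNormedModule)).
    apply (ex_RInt_dilate_derive (ainv' eps)); auto using continuous_cos_sq, pow2_ge_0.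
    intros; now apply continuous_ainv'.
  - apply (is_RInt_scal (V := R_NormedModule)), is_RInt_cos_sq.
  - intros t _; change (scal (- m) (cos t ^ 2)) with (- m * cos t ^ 2).
    assert (Hb : ainv' eps (H * cos t ^ 2) <= - m)
      by (apply ainv'_le; auto; split; [| apply Rle_trans with H]; auto).
    pose proof (pow2_ge_0 (cos t)); nra.
Qed.

End Bounds.

Lemma is_derive_int_inv_a eps H : 0 < eps -> 0 < H ->
  is_derive (int_inv_a eps) H (int_inv_a' eps H).
Proof.
  intros He HH.
  apply (is_derive_RInt_dilate (ainv eps) (ainv' eps)); auto using continuous_cos_sq, pow2_ge_0.
  - intros; now apply is_derive_ainv.
  - intros; now apply continuous_ainv'.
Qed.

Lemma cfun_eq eps H : 0 < eps -> 0 < H -> cfun eps H = 2 * PI / int_inv_a eps H.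
Proof.
  intros He HH; pose proof PI_RGT_0.
  unfold cfun, int_inv_a; f_equal; apply RInt_ext.
  rewrite Rmin_left, Rmax_right by lra.
  intros t Ht; apply inv_afun; auto; lra.
Qed.

Lemma is_derive_cfun eps H : 0 < eps -> 0 < H ->
  is_derive (cfun eps) H (2 * PI * (- int_inv_a' eps H / int_inv_a eps H ^ 2)).
Proof.
  intros He HH.
  apply is_derive_ext_loc with (f := fun u => 2 * PI * / int_inv_a eps u).
  - apply (filter_imp (fun u => 0 < u)); [| now apply open_gt].
    intros u Hu; symmetry; now apply cfun_eq.
  - apply is_derive_scal, is_derive_inv; [now apply is_derive_int_inv_a |].
    apply Rgt_not_eq, int_inv_a_gt_0; lra.
Qed.

Theorem lemma4p3 :
  forall cs : R, 0 < cs ->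
  exists eps0 : R, 0 < eps0 /\
    forall eps : R, 0 < eps <= eps0 ->
    exists delta : R, 0 < delta /\
      forall K : R, cs <= K <= / cs ->
        ex_derive (cfun eps) K /\ delta <= Rabs (Derive (cfun eps) K).
Proof.
  intros cs Hcs.
  exists 1; split; [lra |]; intros eps [He _].
  assert (HS : 0 < / cs) by now apply Rinv_0_lt_compat.
  pose proof (disc_sqrt_ge_1 eps (/ cs) ltac:(lra) ltac:(lra)).
  set (W := disc_sqrt eps (/ cs)) in *.
  set (m := eps / (W ^ 3 * (1 + W))).
  assert (Hm : 0 < m).
  { apply Rdiv_lt_0_compat; [lra | apply Rmult_lt_0_compat; [apply pow_lt |]; lra]. }
  exists (m / 2); split; [lra |]; intros K HK.
  assert (HK0 : 0 < K) by lra.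
  assert (Hder := is_derive_cfun eps K He HK0).
  split; [eexists; exact Hder |].
  rewrite (is_derive_unique _ _ _ Hder).
  pose proof PI_RGT_0.
  assert (HJ := int_inv_a_gt_0 eps K He ltac:(lra)).
  assert (HJle := int_inv_a_le eps K He ltac:(lra)).
  assert (HdJ := int_inv_a'_le eps K He ltac:(lra) (/ cs) ltac:(lra)); fold W m in HdJ.
  set (J := int_inv_a eps K) in *; set (dJ := int_inv_a' eps K) in *.
  eapply Rle_trans; [| apply Rle_abs].
  apply Rmult_le_reg_r with (J ^ 2); [nra |].
  replace (2 * PI * (- dJ / J ^ 2) * J ^ 2) with (2 * PI * (- dJ)) by (field; lra).
  assert (HJ2 : J ^ 2 <= 4 * PI ^ 2) by nra.
  nra.
Qed.
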